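(* Let $d$ be an odd prime and $n\ge 2$. Let $\bar X_1,\bar Z_1,\dots,\bar X_n,\bar Z_n\in\mathcal{P}_d^n$ be such that the association $X_i\mapsto\bar X_i$, $Z_i\mapsto\bar Z_i$ ($i=1,\dots,n$) is commutation relation preserving, and suppose $\bar X_1=X\otimes P'$ and $\bar Z_1=Z\otimes Q'$ for some $P',Q'\in\mathcal{P}_d^{n-1}$. Then there exists a circuit $U$ built from the gates $C_X$, $F$, $S$ such that $UX_1U^{-1}=\lambda\, X\otimes P'$ and $UZ_1U^{-1}=\mu\, Z\otimes Q'$ for some complex scalars $\lambda,\mu$.
   Context: $\omega=e^{2\pi i/d}$; $X|j\rangle=|j+1\bmod d\rangle$, $Z|j\rangle=\omega^j|j\rangle$, $F|j\rangle=\frac1{\sqrt d}\sum_m\omega^{jm}|m\rangle$, $S|j\rangle=\omega^{j(j+1)/2}|j\rangle$, $C_X|j\rangle|k\rangle=|j\rangle|j+k\bmod d\rangle$. $X_i,Z_i$ denote $X,Z$ acting on qudit $i$ (identity elsewhere). $\mathcal{P}_d^n$ is the group of operators $\omega^kZ_1^{a_1}X_1^{b_1}\cdots Z_n^{a_n}X_n^{b_n}$. For $P=\omega^kZ_1^{a_1}X_1^{b_1}\cdots Z_n^{a_n}X_n^{b_n}$, $Q=\omega^lZ_1^{c_1}X_1^{e_1}\cdots Z_n^{c_n}X_n^{e_n}$ define $(P,Q)=\sum_i(a_ie_i-b_ic_i)\in\mathbb{Z}_d$ (so $PQ=\omega^{(P,Q)}QP$). An association $P_i\mapsto\bar P_i$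 between equal-size indexed families in $\mathcal{P}_d^n$ is commutation relation preserving if $(P_i,P_j)=(\bar P_i,\bar P_j)$ for all $i,j$. A circuit built from a gate set is a finite product of gates from the set, one-qudit gates on any qudit, two-qudit gates on any ordered pair of distinct qudits. *)

From HB Require Import structures.
From mathcomp Require Import all_boot all_order all_algebra all_field.
Set Implicit Arguments. Unset Strict Implicit. Unset Printing Implicit Defensive.
Import Order.TTheory GRing.Theory Num.Theory.
Local Open Scope ring_scope.

(* omega = e^{2 pi i/d}: d.-root (-1) is e^{i pi/d} (root of minimal
   nonnegative argument), its square is e^{2 pi i/d}. *)
Definition omega (d : nat) : algC := (d.-root (-1)) ^+ 2.

Definition state (d n : nat) := {ffun 'I_n -> 'I_d}.

Definition op (d n : nat) := 'M[algC]_#|{: state d n}|.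

Definition mkop (d n : nat) (f : state d n -> state d n -> algC) : op d n :=
  \matrix_(i, j) f (enum_val i) (enum_val j).

Definition agree_off (d n : nat) (i : 'I_n) (s t : state d n) : bool :=
  [forall k, (k != i) ==> (s k == t k)].

(* X_i |j> = |j+1 mod d> on qudit i *)
Definition Xq (d n : nat) (i : 'I_n) : op d n :=
  mkop (fun s t => ((agree_off i s t) && (val (s i) == (val (t i) + 1) %% d)%N)%:R).

Definition Zq (d n : nat) (i : 'I_n) : op d n :=
  mkop (fun s t => (s == t)%:R * omega d ^+ val (t i)).

(* F_i |j> = 1/sqrt d sum_m omega^{jm} |m> on qudit i *)
Definition Fq (d n : nat) (i : 'I_n) : op d n :=
  mkop (fun s t => (agree_off i s t)%:R * omega d ^+ (val (t i) * val (s i))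
                   / sqrtC d%:R).

Definition Sq (d n : nat) (i : 'I_n) : op d n :=
  mkop (fun s t => (s == t)%:R * omega d ^+ ((val (t i) * (val (t i)).+1) %/ 2)%N).

(* C_X on ordered pair (i, j): |a>_i |b>_j -> |a>_i |a+b mod d>_j *)
Definition CXq (d n : nat) (i j : 'I_n) : op d n :=
  mkop (fun s t => ([forall k, (k != j) ==> (s k == t k)]
                    && (val (s j) == (val (t i) + val (t j)) %% d)%N)%:R).

(* matrix power by iterated product (op d n is not syntactically a ring) *)
Definition mxpow (d n : nat) (A : op d n) (e : nat) : op d n :=
  iter e (mulmx A) 1%:M.

(* Pauli data: omega^k Z_1^{a_1} X_1^{b_1} ... Z_n^{a_n} X_n^{b_n} *)
Record pdata (n : nat) := PData { pk : nat; pa : 'I_n -> nat; pb : 'I_n -> nat }.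

Definition pauli (d n : nat) (P : pdata n) : op d n :=
  omega d ^+ pk P *:
    foldr (fun i M => (mxpow (Zq d i) (pa P i) *m mxpow (Xq d i) (pb P i)) *m M)
          1%:M (enum 'I_n).

(* the symplectic form (P,Q) = sum_i (a_i e_i - b_i c_i), as an integer
   (to be compared modulo d) *)
Definition sympl (n : nat) (P Q : pdata n) : int :=
  \sum_(i < n) ((pa P i * pb Q i)%:Z - (pb P i * pa Q i)%:Z).

(* the standard generators: (i, false) |-> X_i, (i, true) |-> Z_i *)
Definition std_gen (n : nat) (u : 'I_n * bool) : pdata n :=
  if u.2 then PData 0 (fun k => (k == u.1 : nat)) (fun _ => 0%N)
  else PData 0 (fun _ => 0%N) (fun k => (k == u.1 : nat)).

Definition comm_preserving (d n : nat) (Pbar : 'I_n * bool -> pdata n) : Prop :=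
  forall u v, (sympl (std_gen u) (std_gen v) = sympl (Pbar u) (Pbar v) %[mod d])%Z.

Inductive gate (n : nat) := GF of 'I_n | GS of 'I_n | GCX of 'I_n & 'I_n.

Definition gate_ok (n : nat) (g : gate n) : bool :=
  if g is GCX i j then i != j else true.

Definition gate_op (d n : nat) (g : gate n) : op d n :=
  match g with GF i => Fq d i | GS i => Sq d i | GCX i j => CXq d i j end.

Definition circuit_op (d n : nat) (c : seq (gate n)) : op d n :=
  foldr (fun g M => gate_op d g *m M) 1%:M c.

Definition q1 (n : nat) (hn : (0 < n)%N) : 'I_n := Ordinal hn.

From mathcomp Require Import all_boot all_order all_algebra all_field.
From mathcomp Require Import ring.
Set Implicit Arguments. Unset Strict Implicit. Unset Printing Implicit Defensive.
Import Order.TTheory GRing.Theory Num.Theory.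
Local Open Scope ring_scope.

(* Every Pauli operator is a nonzero multiple of some Z^a X^b (a, b in Z_d^n),
   and conjugating Z^a X^b by F, S or C_X gives a nonzero multiple of some
   Z^a' X^b', where (a', b') is a linear (symplectic) image of (a, b).  So it
   suffices to find a gate word whose symplectic action sends the exponent
   pairs of X_1 and Z_1 to those of bar X_1 and bar Z_1.  Powers of short
   words act as shears between qudit 1 and another qudit k.  Going through
   the qudits k = 2..n we first build bar Z_1 while X_1 stays fixed, then
   build bar X_1; meanwhile only the qudit-1 Z-exponent of the image of Z_1
   moves, by the k-th term of the symplectic product (bar X_1, bar Z_1).
   That product is -1 and qudit 1 alone already contributes -1, so these
   terms add up to 0 and the image of Z_1 ends at bar Z_1. *)

Section Qudits.
Variables m n : nat.
Local Notation D := m.+2.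
Local Notation vec := {ffun 'I_n -> 'I_D}.
Local Notation Op := (op D n).

(** * Weyl operators *)

Lemma omega_expD : omega D ^+ D = 1.
Proof. by rewrite /omega -exprM mulnC exprM rootCK // expr2 mulrNN mulr1. Qed.

Definition phase (x : 'I_D) : algC := omega D ^+ x.

Lemma phase_nat k : omega D ^+ k = phase k%:R.
Proof. by rewrite /phase Zp_nat /= expr_mod // omega_expD. Qed.

Lemma phaseD x y : phase (x + y) = phase x * phase y.
Proof. by rewrite /phase -exprD /= expr_mod // omega_expD. Qed.

Lemma phase0 : phase 0 = 1.
Proof. by rewrite /phase expr0. Qed.

Lemma phase_neq0 x : phase x != 0.
Proof. by rewrite expf_neq0 //; have := oner_neq0 algC; rewrite -omega_expD expf_eq0. Qed.

Lemma mkop_ext f g : (forall s t, f s t = g s t) -> (mkop f : Op) = mkop g.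
Proof. by move=> fg; apply/matrixP => i j; rewrite !mxE fg. Qed.

Lemma mul_mkop f g :
  (mkop f : Op) *m mkop g = mkop (fun s t => \sum_u f s u * g u t).
Proof.
apply/matrixP => i j; rewrite !mxE (reindex (@enum_rank _)) /=.
  by apply: eq_bigr => u _; rewrite !mxE enum_rankK.
by exists (@enum_val _ _) => x _; rewrite ?enum_rankK ?enum_valK.
Qed.

Lemma scale_mkop c f : c *: (mkop f : Op) = mkop (fun s t => c * f s t).
Proof. by apply/matrixP => i j; rewrite !mxE. Qed.

Lemma mkop1 : mkop (fun s t => (s == t)%:R) = 1%:M :> Op.
Proof. by apply/matrixP => i j; rewrite !mxE (inj_eq enum_val_inj). Qed.

Lemma sum_mul_delta (F : state D n -> algC) v : \sum_u F u * (u == v)%:R = F v.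
Proof.
rewrite (bigD1 v) //= eqxx mulr1 big1 ?addr0 // => u /negbTE ->.
by rewrite mulr0.
Qed.

Lemma sum_delta_mul (F : state D n -> algC) v : \sum_u (v == u)%:R * F u = F v.
Proof.
by rewrite -[RHS](sum_mul_delta F); apply: eq_bigr => u _; rewrite mulrC eq_sym.
Qed.

Lemma monomial_unit (pi : state D n -> state D n) (phi : state D n -> algC) f :
  injective pi -> (forall t, phi t != 0) ->
  (forall s t, f s t = (s == pi t)%:R * phi t) -> (mkop f : Op) \in unitmx.
Proof.
move=> pi_inj phi_neq0 fE.
pose g s t := (phi s)^-1 * (s == invF pi_inj t)%:R.
suff /mulmx1_unit [] : (mkop f : Op) *m mkop g = 1%:M by [].
rewrite mul_mkop -mkop1; apply: mkop_ext => s t.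
under eq_bigr => u _ do rewrite fE /g mulrA -[_ * phi u * _]mulrA divff // mulr1.
by rewrite (sum_mul_delta (fun u => (s == pi u)%:R)) (f_invF pi_inj).
Qed.

Definition dot (a s : vec) : 'I_D := \sum_k a k * s k.

Lemma dotDl a b s : dot (a + b) s = dot a s + dot b s.
Proof. by rewrite /dot -big_split; apply: eq_bigr => k _; rewrite ffunE mulrDl. Qed.

Lemma dotDr a s t : dot a (s + t) = dot a s + dot a t.
Proof. by rewrite /dot -big_split; apply: eq_bigr => k _; rewrite ffunE mulrDr. Qed.

Lemma dot0l s : dot 0 s = 0.
Proof. by rewrite /dot big1 // => k _; rewrite ffunE mul0r. Qed.

Lemma dot0r a : dot a 0 = 0.
Proof. by rewrite /dot big1 // => k _; rewrite ffunE mulr0. Qed.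

Lemma dotNl a s : dot (- a) s = - dot a s.
Proof. by rewrite /dot -sumrN; apply: eq_bigr => k _; rewrite ffunE mulNr. Qed.

Definition deltav (i : 'I_n) (x : 'I_D) : vec := [ffun k => if k == i then x else 0].

Lemma dot_deltavl i x s : dot (deltav i x) s = x * s i.
Proof.
rewrite /dot (bigD1 i) //= ffunE eqxx big1 ?addr0 // => k /negbTE ki.
by rewrite ffunE ki mul0r.
Qed.

Lemma dot_deltavr a i x : dot a (deltav i x) = a i * x.
Proof.
rewrite /dot (bigD1 i) //= ffunE eqxx big1 ?addr0 // => k /negbTE ki.
by rewrite ffunE ki mulr0.
Qed.

Lemma deltav0 i : deltav i 0 = 0.
Proof. by apply/ffunP => k; rewrite !ffunE; case: ifP. Qed.

Lemma deltavD i x y : deltav i x + deltav i y = deltav i (x + y).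
Proof. by apply/ffunP => k; rewrite !ffunE; case: ifP; rewrite ?addr0. Qed.

Lemma agree_offP i (s t : state D n) :
  reflect (s = t + deltav i (s i - t i)) (agree_off i s t).
Proof.
apply: (iffP forallP) => [agree|->] => [|k]; last first.
  by apply/implyP => /negbTE ki; rewrite !ffunE ki addr0.
apply/ffunP => k; rewrite !ffunE; case: eqP => [->|/eqP ki]; first by rewrite addrC subrK.
by rewrite addr0; apply/eqP; exact: (implyP (agree k) ki).
Qed.

Lemma agree_off_deltav i (s t : state D n) x :
  agree_off i s t && (s i == t i + x) = (s == t + deltav i x).
Proof.
apply/andP/eqP => [[/agree_offP sE /eqP sti]|->].
  by rewrite sE sti [t i + x]addrC addrK.
split; last by rewrite !ffunE eqxx.
by apply/forallP => k; apply/implyP => /negbTE ki; rewrite !ffunE ki addr0.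
Qed.

(* [weyl a b] is Z^a X^b: it maps |t> to omega^(a.(t+b)) |t+b>. *)
Definition weyl (a b : vec) : Op :=
  mkop (fun s t => (s == t + b)%:R * phase (dot a s)).

Lemma mulmx_weyl f a b : (mkop f : Op) *m weyl a b =
  mkop (fun s t => f s (t + b) * phase (dot a (t + b))).
Proof.
rewrite mul_mkop; apply: mkop_ext => s t.
rewrite -[RHS](sum_mul_delta (fun u => f s u * phase (dot a u))).
by apply: eq_bigr => u _; rewrite mulrA mulrAC.
Qed.

Lemma weyl_mulmx g a b : weyl a b *m (mkop g : Op) =
  mkop (fun s t => phase (dot a s) * g (s - b) t).
Proof.
rewrite mul_mkop; apply: mkop_ext => s t.
rewrite -[RHS](sum_delta_mul (fun u => phase (dot a s) * g u t)).
by apply: eq_bigr => u _; rewrite subr_eq mulrA.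
Qed.

Lemma weyl_mul a b a' b' : weyl a b *m weyl a' b' =
  phase (- dot a' b) *: weyl (a + a') (b + b').
Proof.
rewrite [X in X *m _]/weyl mulmx_weyl /weyl scale_mkop; apply: mkop_ext => s t /=.
rewrite [b + b']addrC addrA.
have [->|_] := eqVneq s (t + b' + b); last by rewrite !mul0r mulr0.
rewrite !mul1r -!phaseD !(dotDl, dotDr); congr phase; ring.
Qed.

Lemma weyl00 : weyl 0 0 = 1%:M.
Proof.
by rewrite -mkop1; apply: mkop_ext => s t; rewrite addr0 dot0l phase0 mulr1.
Qed.

Lemma Zq_weyl i : Zq D i = weyl (deltav i 1) 0.
Proof.
apply: mkop_ext => s t; rewrite addr0 dot_deltavl mul1r.
by have [->|_] := eqVneq s t; rewrite ?mul0r.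
Qed.

Lemma Xq_weyl i : Xq D i = weyl 0 (deltav i 1).
Proof.
apply: mkop_ext => s t; rewrite dot0l phase0 mulr1 -agree_off_deltav.
by congr ((nat_of_bool (_ && _))%:R); rewrite -val_eqE.
Qed.

Lemma mxpow_Zq i e : mxpow (Zq D i) e = weyl (deltav i e%:R) 0.
Proof.
elim: e => [|e IH]; first by rewrite deltav0 weyl00.
rewrite /mxpow iterS -/(mxpow _ e) IH Zq_weyl weyl_mul dot0r oppr0 phase0.
by rewrite scale1r deltavD addr0 -mulrS.
Qed.

Lemma mxpow_Xq i e : mxpow (Xq D i) e = weyl 0 (deltav i e%:R).
Proof.
elim: e => [|e IH]; first by rewrite deltav0 weyl00.
rewrite /mxpow iterS -/(mxpow _ e) IH Xq_weyl weyl_mul dot0l oppr0 phase0.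
by rewrite scale1r deltavD addr0 -mulrS.
Qed.

Definition restrict (L : seq 'I_n) (v : vec) : vec :=
  [ffun k => if k \in L then v k else 0].

Lemma restrict_nil v : restrict [::] v = 0.
Proof. by apply/ffunP => k; rewrite !ffunE. Qed.

Lemma restrict_cons k L v : k \notin L ->
  restrict (k :: L) v = deltav k (v k) + restrict L v.
Proof.
move=> kL; apply/ffunP => j; rewrite !ffunE in_cons.
by case: eqP => [->|_]; rewrite ?(negbTE kL) ?addr0 ?add0r.
Qed.

Lemma restrict_cons2 i k L v : k \notin i :: L ->
  restrict (i :: k :: L) v = restrict (i :: L) v + deltav k (v k).
Proof.
rewrite in_cons negb_or => /andP [/negbTE ki /negbTE kL]; apply/ffunP => j.
rewrite !ffunE !in_cons; have [->|_] := eqVneq j k; first by rewrite ki kL add0r.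
by rewrite addr0.
Qed.

Lemma restrict_full L v : (forall k, k \in L) -> restrict L v = v.
Proof. by move=> Lfull; apply/ffunP => k; rewrite ffunE Lfull. Qed.

Definition nat_vec (f : 'I_n -> nat) : vec := [ffun k => (f k)%:R].

Lemma foldr_ZX_weyl (fa fb : 'I_n -> nat) (L : seq 'I_n) : uniq L ->
  exists2 c, c != 0 &
  foldr (fun i M => (mxpow (Zq D i) (fa i) *m mxpow (Xq D i) (fb i)) *m M)
     (1%:M : Op) L = c *: weyl (restrict L (nat_vec fa)) (restrict L (nat_vec fb)).
Proof.
elim: L => [_|i L IH /= /andP [iL uL]].
  by exists 1; rewrite ?oner_neq0 // scale1r !restrict_nil weyl00.
have [c c0 ->] := IH uL.
rewrite mxpow_Zq mxpow_Xq weyl_mul dot0l oppr0 phase0 scale1r add0r addr0.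
rewrite -scalemxAr weyl_mul scalerA !restrict_cons // !ffunE.
by exists (c * phase (- dot (restrict L (nat_vec fa)) (deltav i (fb i)%:R)));
  rewrite // mulf_neq0 // phase_neq0.
Qed.

Lemma pauli_weyl (P : pdata n) : exists2 c, c != 0 &
  pauli D P = c *: weyl (nat_vec (pa P)) (nat_vec (pb P)).
Proof.
have [c c0 factorP] := foldr_ZX_weyl (pa P) (pb P) (enum_uniq 'I_n).
exists (omega D ^+ pk P * c).
  by rewrite mulf_neq0 // phase_nat phase_neq0.
by rewrite /pauli factorP scalerA !restrict_full // => k; rewrite mem_enum.
Qed.

(** * Conjugating Weyl operators by the gates *)

Lemma CXq_perm i j : CXq D i j = mkop (fun s t => (s == t + deltav j (t i))%:R).
Proof.
apply: mkop_ext => s t; rewrite -agree_off_deltav.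
by congr ((nat_of_bool (_ && _))%:R); rewrite -val_eqE /= addnC.
Qed.

Lemma CXq_weyl i j a b : i != j ->
  CXq D i j *m weyl a b =
  weyl (a - deltav i (a j)) (b + deltav j (b i)) *m CXq D i j.
Proof.
move=> /negbTE ij; rewrite CXq_perm mulmx_weyl weyl_mulmx; apply: mkop_ext => s t /=.
have shiftE : t + b + deltav j ((t + b) i) = t + deltav j (t i) + (b + deltav j (b i)).
  by apply/ffunP => k; rewrite !ffunE; case: eqP => _; ring.
rewrite shiftE subr_eq.
have [->|_] := eqVneq s (t + deltav j (t i) + (b + deltav j (b i))).
  rewrite mul1r mulr1 -shiftE; congr phase.
  by rewrite !(dotDl, dotDr, dotNl, dot_deltavl, dot_deltavr) !ffunE ij; ring.
by rewrite mul0r mulr0.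
Qed.

Lemma CXq_unit (i j : 'I_n) : i != j -> CXq D i j \in unitmx.
Proof.
move=> /negbTE ij; rewrite CXq_perm.
apply: (@monomial_unit (fun t => t + deltav j (t i)) (fun=> 1)) => [u v /ffunP uv|t|s t].
- have ui : u i = v i by have := uv i; rewrite !ffunE ij !addr0.
  by move/ffunP: uv; rewrite ui => /addIr.
- exact: oner_neq0.
- by rewrite mulr1.
Qed.

Section OddDimension.
Hypothesis D_odd : odd D.

Definition half : 'I_D := (D.+1 %/ 2)%:R.

Lemma half2 : half * 2%:R = 1.
Proof.
rewrite /half -natrM divnK; last by rewrite dvdn2 /= negbK.
by rewrite -addn1 natrD (pchar_Zp (isT : (1 < D)%N)) add0r.
Qed.

(* lets [ring] prove identities that only hold once [half * 2 = 1] is used *)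
Lemma eq_by_half (z x y : 'I_D) : x - y = (half * 2%:R - 1) * z -> x = y.
Proof. by rewrite half2 subrr mul0r => /eqP; rewrite subr_eq0 => /eqP. Qed.

Lemma Sq_diag i :
  Sq D i = mkop (fun s t : state D n => (s == t)%:R * phase (half * (t i * (t i + 1)))).
Proof.
apply: mkop_ext => s t; congr (_ * _); rewrite phase_nat; congr phase.
have even_prod : (2 %| t i * (t i).+1)%N by rewrite dvdn2 oddM /=; case: (odd _).
transitivity (half * (2%:R * ((t i * (t i).+1) %/ 2)%:R)).
  by rewrite mulrA half2 mul1r.
by rewrite -natrM mulnC divnK // natrM natr_Zp -[(t i).+1]addn1 natrD natr_Zp.
Qed.

Lemma Sq_weyl i a b : Sq D i *m weyl a b =
  phase (half * (b i - b i * b i)) *: (weyl (a + deltav i (b i)) b *m Sq D i).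
Proof.
rewrite Sq_diag mulmx_weyl weyl_mulmx scale_mkop; apply: mkop_ext => s t /=.
rewrite subr_eq; have [->|_] := eqVneq s (t + b); last by rewrite !mul0r !mulr0.
rewrite !mul1r -!phaseD !(dotDl, dot_deltavl) !ffunE; congr phase.
by apply: (@eq_by_half (t i * b i + b i * b i)); ring.
Qed.

Lemma Sq_unit (i : 'I_n) : Sq D i \in unitmx.
Proof.
rewrite Sq_diag.
apply: (@monomial_unit id (fun t => phase (half * (t i * (t i + 1))))) => // t.
exact: phase_neq0.
Qed.

End OddDimension.

Lemma agree_off_shift i (s t b b' : state D n) : (forall k, k != i -> b k = b' k) ->
  agree_off i s (t + b) = agree_off i (s - b') t.
Proof.
move=> bb'; apply: eq_forallb => k; case: (eqVneq k i) => //= ki.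
by rewrite !ffunE bb' // subr_eq.
Qed.

Lemma Fq_kernel i : Fq D i =
  mkop (fun s t : state D n => (agree_off i s t)%:R * phase (t i * s i) / sqrtC D%:R).
Proof. by apply: mkop_ext => s t; rewrite phase_nat natrM !natr_Zp. Qed.

Lemma Fq_weyl i a b : Fq D i *m weyl a b = phase (a i * b i) *:
  (weyl (a + deltav i (b i - a i)) (b - deltav i (b i + a i)) *m Fq D i).
Proof.
rewrite Fq_kernel mulmx_weyl weyl_mulmx scale_mkop; apply: mkop_ext => s t /=.
rewrite -(@agree_off_shift i s t b) => [|k /negbTE ki]; last by rewrite !ffunE ki subr0.
have [/agree_offP sE|_] := boolP (agree_off i s (t + b)); last by rewrite !mul0r !mulr0.
rewrite !mul1r mulrAC !mulrA -!phaseD; congr (phase _ * _).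
rewrite {2 3}sE !(dotDl, dotDr, dotNl, dot_deltavl, dot_deltavr) !ffunE eqxx; ring.
Qed.

Lemma agree_off_chain i (s u t : state D n) :
  agree_off i s u && agree_off i u t = agree_off i s t && agree_off i s u.
Proof.
apply/andP/andP => -[/forallP su /forallP ut]; split; apply/forallP => k;
  apply/implyP => ki; move: (implyP (su k) ki) (implyP (ut k) ki) => /eqP -> /eqP //.
by move=> <-.
Qed.

Lemma sum_agree_off i (s : state D n) (g : 'I_D -> algC) :
  \sum_u (agree_off i s u)%:R * g (u i) = \sum_(j : 'I_D) g j.
Proof.
rewrite (partition_big (fun u : state D n => u i) predT) //=; apply: eq_bigr => j _.
pose u0 := s + deltav i (j - s i).
have u0i : u0 i = j by rewrite !ffunE eqxx addrC subrK.
rewrite (bigD1 u0) ?u0i //= big1 ?addr0 => [|u /andP [/eqP ui u_neq0]].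
  rewrite (_ : agree_off i s u0) ?mul1r //.
  by apply/forallP => k; apply/implyP => /negbTE ki; rewrite !ffunE ki addr0.
case: (boolP (agree_off i s u)) => [/agree_offP sE|]; last by rewrite mul0r.
suff uu0 : u = u0 by rewrite uu0 eqxx in u_neq0.
by apply/ffunP => k; rewrite /u0 -ui {1}sE !ffunE; case: eqP => _; ring.
Qed.

Section PrimeDimension.
Hypothesis D_prime : prime D.

(* The order of omega divides the prime D, and omega = 1 would make the
   minimal-argument root D.-root (-1) real, i.e. equal to 1 or -1. *)
Lemma omega_prim : D.-primitive_root (omega D).
Proof.
have [k prim_k kD] := prim_order_exists (ltn0Sn _) omega_expD.
have [k1|k1] := eqVneq k 1; last by move: kD prim_k => /(prime_nt_dvdP D_prime k1) ->.
exfalso; move: prim_k; rewrite k1 => /prim_expr_order; rewrite expr1 /omega.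
set r := D.-root (-1) => r2.
have rD : r ^+ D = -1 by rewrite rootCK.
have : (r - 1) * (r + 1) == 0.
  by rewrite mulrDr mulr1 mulrBl mul1r -expr2 r2; apply/eqP; ring.
rewrite mulf_eq0 subr_eq0 => /orP [/eqP r1|].
  move: rD; rewrite r1 expr1n => /eqP; rewrite -subr_eq0 opprK.
  by rewrite (_ : 1 + 1 = 2%:R) // pnatr_eq0.
rewrite addr_eq0 => /eqP rN1.
have : ~~ (r < 0) by rewrite /r rootC_lt0.
by rewrite rN1 ltrN10.
Qed.

Lemma sum_phase (x : 'I_D) : \sum_(j : 'I_D) phase (j * x) = (x == 0)%:R * D%:R.
Proof.
have phaseX j : phase (j * x) = phase x ^+ j.
  by rewrite -exprM mulnC phase_nat natrM !natr_Zp.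
rewrite (eq_bigr _ (fun j _ => phaseX j)); have [->|x0] := eqVneq x 0.
  by rewrite phase0 (eq_bigr (fun=> 1)) => [|j _]; rewrite ?expr1n // sumr_const card_ord mul1r.
have phase_x_neq1 : phase x != 1.
  by rewrite -(prim_order_dvd omega_prim) /dvdn modn_small.
have := subrX1 (phase x) D; rewrite -exprM mulnC exprM omega_expD expr1n subrr.
by move=> /esym /eqP; rewrite mulf_eq0 subr_eq0 (negbTE phase_x_neq1) mul0r => /eqP.
Qed.

Lemma Fq_mulmx_dual i :
  Fq D i *m mkop (fun s t : state D n => (agree_off i s t)%:R * phase (- (t i * s i))) =
  (D%:R / sqrtC D%:R) *: 1%:M.
Proof.
rewrite Fq_kernel mul_mkop -mkop1 scale_mkop; apply: mkop_ext => s t.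
transitivity ((agree_off i s t)%:R / sqrtC D%:R *
    \sum_u (agree_off i s u)%:R * phase (u i * (s i - t i))).
  rewrite mulr_sumr; apply: eq_bigr => u _.
  have agreeE : (agree_off i s u)%:R * (agree_off i u t)%:R =
      (agree_off i s t)%:R * (agree_off i s u)%:R :> algC.
    by rewrite -!natrM !mulnb agree_off_chain.
  have phaseE : phase (u i * s i) * phase (- (t i * u i)) = phase (u i * (s i - t i)).
    by rewrite -phaseD; congr phase; ring.
  transitivity ((agree_off i s u)%:R * (agree_off i u t)%:R *
    (phase (u i * s i) * phase (- (t i * u i))) / sqrtC D%:R); first by ring.
  by rewrite agreeE phaseE; ring.
rewrite (sum_agree_off i s (fun j => phase (j * (s i - t i)))) sum_phase.
have st : (s == t) = agree_off i s t && (s i == t i).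
  by rewrite -[t i]addr0 agree_off_deltav deltav0 !addr0.
by rewrite subr_eq add0r st -mulnb natrM; ring.
Qed.

Lemma Fq_unit (i : 'I_n) : Fq D i \in unitmx.
Proof.
have F_neq0 : D%:R / sqrtC D%:R != 0 :> algC.
  by rewrite mulf_neq0 ?invr_eq0 ?sqrtC_eq0 ?pnatr_eq0.
have := Fq_mulmx_dual i; set Fdual := mkop _ => FFdual.
have [] // := @mulmx1_unit _ _ (Fq D i) ((D%:R / sqrtC D%:R)^-1 *: Fdual).
by rewrite -scalemxAr FFdual scalerA mulVf ?scale1r.
Qed.

End PrimeDimension.

(** * The symplectic action of circuits *)

Definition gate_symp (g : gate n) (v : vec * vec) : vec * vec :=
  let: (a, b) := v in
  match g with
  | GF i => (a + deltav i (b i - a i), b - deltav i (b i + a i))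
  | GS i => (a + deltav i (b i), b)
  | GCX i j => (a - deltav i (a j), b + deltav j (b i))
  end.

Definition circuit_symp (c : seq (gate n)) (v : vec * vec) : vec * vec :=
  foldr gate_symp v c.

Definition conjugates (U : Op) (v w : vec * vec) :=
  exists c : algC, U *m weyl v.1 v.2 = c *: (weyl w.1 w.2 *m U).

Section Clifford.
Hypotheses (D_prime : prime D) (D_odd : odd D).

Lemma gate_conjugates (g : gate n) v :
  gate_ok g -> conjugates (gate_op D g) v (gate_symp g v).
Proof.
case: v => a b; case: g => [i|i|i j] /= ok.
- by exists (phase (a i * b i)); rewrite Fq_weyl.
- by exists (phase (half * (b i - b i * b i))); rewrite Sq_weyl.
- by exists 1; rewrite scale1r CXq_weyl.
Qed.

Lemma gate_unit (g : gate n) : gate_ok g -> gate_op D g \in unitmx.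
Proof.
by case: g => [i|i|i j] /= ok; [exact: Fq_unit | exact: Sq_unit | exact: CXq_unit].
Qed.

Lemma circuit_conjugates c v : all (@gate_ok n) c ->
  circuit_op D c \in unitmx /\ conjugates (circuit_op D c) v (circuit_symp c v).
Proof.
elim: c => [_|g c IH /= /andP [g_ok /IH [c_unit [k ck]]]].
  by split; [exact: unitmx1 | exists 1; rewrite scale1r mul1mx mulmx1].
split; first by rewrite unitmx_mul gate_unit.
have [k' gk'] := gate_conjugates (circuit_symp c v) g_ok.
exists (k * k'); rewrite -mulmxA ck -scalemxAr [in LHS]mulmxA gk' -scalemxAl scalerA.
by rewrite mulmxA.
Qed.

Lemma circuit_conj_weyl c v : all (@gate_ok n) c -> exists k : algC,
  circuit_op D c *m weyl v.1 v.2 *m invmx (circuit_op D c) =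
  k *: weyl (circuit_symp c v).1 (circuit_symp c v).2.
Proof.
move=> /(circuit_conjugates v) [c_unit [k ck]].
by exists k; rewrite ck -scalemxAl mulmxK.
Qed.

End Clifford.

Lemma circuit_symp_cat c c' v :
  circuit_symp (c ++ c') v = circuit_symp c (circuit_symp c' v).
Proof. exact: foldr_cat. Qed.

Definition wpow (w : seq (gate n)) (l : nat) : seq (gate n) := flatten (nseq l w).

Lemma circuit_symp_wpow w l v : circuit_symp (wpow w l) v = iter l (circuit_symp w) v.
Proof. by rewrite /wpow; elim: l => //= l IH; rewrite circuit_symp_cat IH. Qed.

Lemma all_wpow w l : all (@gate_ok n) w -> all (@gate_ok n) (wpow w l).
Proof. by move=> w_ok; rewrite /wpow; elim: l => //= l IH; rewrite all_cat w_ok. Qed.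

Definition conjF (k : 'I_n) (g : gate n) : seq (gate n) := [:: GF k; GF k; GF k; g; GF k].

Local Ltac coord_cases := apply/ffunP => t; rewrite !ffunE /=;
  repeat match goal with |- context [?x == ?y] =>
    case: (eqVneq x y) => [?|?]; try subst x end;
  try by match goal with H : is_true (?x != ?x) |- _ => move: H; rewrite eqxx end.

Lemma symp_F3 k v : circuit_symp [:: GF k; GF k; GF k] v =
  (v.1 - deltav k (v.2 k + v.1 k), v.2 + deltav k (v.1 k - v.2 k)).
Proof. by case: v => a b /=; congr pair; coord_cases; ring. Qed.

Lemma symp_conjF k g v : circuit_symp (conjF k g) v =
  circuit_symp [:: GF k; GF k; GF k] (gate_symp g (gate_symp (GF k) v)).
Proof. by []. Qed.

Local Ltac closed_form l :=
  rewrite circuit_symp_wpow; elim: l => [|l]; [|rewrite iterS => ->; rewrite -natr1];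
  rewrite ?symp_conjF ?symp_F3 /=; congr pair; coord_cases; ring.

Section Shears.
Variables k o : 'I_n.
Hypothesis ko : k != o.

Lemma symp_cx_pow l a b : circuit_symp (wpow [:: GCX k o] l) (a, b) =
  (a - deltav k (l%:R * a o), b + deltav o (l%:R * b k)).
Proof. closed_form l. Qed.

Lemma symp_cx_rev_pow l a b : circuit_symp (wpow [:: GCX o k] l) (a, b) =
  (a - deltav o (l%:R * a k), b + deltav k (l%:R * b o)).
Proof. closed_form l. Qed.

Lemma symp_xx_pow l a b : circuit_symp (wpow (conjF k (GCX k o)) l) (a, b) =
  (a, b - deltav k (l%:R * a o) - deltav o (l%:R * a k)).
Proof. closed_form l. Qed.

Lemma symp_cz_pow l a b : circuit_symp (wpow (conjF k (GCX o k)) l) (a, b) =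
  (a - deltav k (l%:R * b o) - deltav o (l%:R * b k), b).
Proof. closed_form l. Qed.

End Shears.

Lemma symp_s_pow o l a b : circuit_symp (wpow [:: GS o] l) (a, b) =
  (a + deltav o (l%:R * b o), b).
Proof. closed_form l. Qed.

Lemma symp_fsf_pow o l a b : circuit_symp (wpow (conjF o (GS o)) l) (a, b) =
  (a, b - deltav o (l%:R * a o)).
Proof. closed_form l. Qed.

(** * Reaching the target pair *)

Section Construction.
Variable o : 'I_n.

Definition Xo : vec * vec := (0, deltav o 1).
Definition Zo : vec * vec := (deltav o 1, 0).

Definition reachable (x z : vec * vec) :=
  exists2 c, all (@gate_ok n) c & (circuit_symp c Xo, circuit_symp c Zo) = (x, z).

Lemma reachable_start : reachable Xo Zo.
Proof. by exists [::]. Qed.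

Lemma reachable_circuit w x z : all (@gate_ok n) w ->
  reachable x z -> reachable (circuit_symp w x) (circuit_symp w z).
Proof.
move=> w_ok [c c_ok [<- <-]].
by exists (w ++ c); rewrite ?all_cat ?w_ok // !circuit_symp_cat.
Qed.

Lemma reachable_Z_step (k : 'I_n) (x y : 'I_D) (A B : vec) : k != o ->
  A o = 1 -> B o = 0 -> A k = 0 -> B k = 0 ->
  reachable Xo (A, B) -> reachable Xo (A + deltav k x, B + deltav k y).
Proof.
move=> ko Ao Bo Ak Bk reach_AB.
(* set the k-th exponents of the image of Z_o, then cancel the -xy this
   leaves in its qudit-o X-exponent; all three shears fix X_o *)
pose w := wpow (conjF o (GS o)) (- (x * y)) ++ wpow [:: GCX k o] (- x) ++
          wpow (conjF k (GCX k o)) (- y).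
have w_ok : all (@gate_ok n) w by rewrite !all_cat !all_wpow //= ko.
have := reachable_circuit w_ok reach_AB.
rewrite /w /Xo !circuit_symp_cat !symp_xx_pow // !symp_cx_pow // !symp_fsf_pow !natr_Zp.
by congr reachable; congr pair; coord_cases; rewrite ?Ao ?Bo ?Ak ?Bk; ring.
Qed.

Lemma reachable_X_step (k : 'I_n) (x y : 'I_D) (A B P Q : vec) : k != o ->
  A o = 0 -> B o = 1 -> A k = 0 -> B k = 0 -> Q o = 0 ->
  reachable (A, B) (P, Q) ->
  reachable (A + deltav k x, B + deltav k y) (P + deltav o (x * Q k - y * P k), Q).
Proof.
move=> ko Ao Bo Ak Bk Qo reach_ABPQ.
(* set the k-th exponents of the image of X_o and cancel the -xy this leaves
   in its qudit-o Z-exponent; the image of Z_o only changes at qudit o *)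
pose w := wpow [:: GS o] (x * y)%R ++ wpow [:: GCX o k] y ++
          wpow (conjF k (GCX o k)) (- x).
have w_ok : all (@gate_ok n) w by rewrite !all_cat !all_wpow //= eq_sym ko.
have := reachable_circuit w_ok reach_ABPQ.
rewrite /w !circuit_symp_cat !symp_cz_pow // !symp_cx_rev_pow // !symp_s_pow !natr_Zp.
by congr reachable; congr pair; coord_cases; rewrite ?Ao ?Bo ?Ak ?Bk ?Qo; ring.
Qed.

Lemma reachable_Z_phase (az bz : vec) L : az o = 1 -> bz o = 0 ->
  o \notin L -> uniq L -> reachable Xo (restrict (o :: L) az, restrict (o :: L) bz).
Proof.
move=> azo bzo; elim: L => [_ _|k L IH].
  by rewrite !restrict_cons // !restrict_nil azo bzo deltav0 !addr0; exact: reachable_start.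
rewrite in_cons negb_or => /andP [ok oL] /andP [kL uL].
have kL' : k \notin o :: L by rewrite in_cons negb_or eq_sym ok.
rewrite !restrict_cons2 //; apply: reachable_Z_step (IH oL uL).
all: by rewrite ?ffunE ?mem_head ?(negbTE kL') // eq_sym.
Qed.

Lemma reachable_X_phase (ax bx az bz : vec) L :
  ax o = 0 -> bx o = 1 -> bz o = 0 -> o \notin L -> uniq L -> reachable Xo (az, bz) ->
  reachable (restrict (o :: L) ax, restrict (o :: L) bx)
            (az + deltav o (\sum_(j <- L) (ax j * bz j - bx j * az j)), bz).
Proof.
move=> axo bxo bzo; elim: L => [_ _|k L IH].
  by rewrite !restrict_cons // !restrict_nil axo bxo big_nil !deltav0 !addr0.
rewrite in_cons negb_or => /andP [ok oL] /andP [kL uL] reach_Z.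
have kL' : k \notin o :: L by rewrite in_cons negb_or eq_sym ok.
have ko : k != o by rewrite eq_sym.
rewrite !restrict_cons2 //.
have := reachable_X_step (ax k) (bx k) ko _ _ _ _ bzo (IH oL uL reach_Z).
rewrite big_cons !ffunE ?mem_head ?(negbTE kL') ?(negbTE ko) axo bxo.
move=> /(_ erefl erefl erefl erefl).
by congr reachable; congr pair; coord_cases; ring.
Qed.

Lemma reachable_target (ax bx az bz : vec) :
  ax o = 0 -> bx o = 1 -> az o = 1 -> bz o = 0 ->
  \sum_k (ax k * bz k - bx k * az k) = -1 -> reachable (ax, bx) (az, bz).
Proof.
move=> axo bxo azo bzo sum_m1.
pose L := [seq k <- index_enum 'I_n | k != o].
have oL : o \notin L by rewrite mem_filter eqxx.
have uL : uniq L by rewrite filter_uniq // index_enum_uniq.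
have oL_full k : k \in o :: L by rewrite in_cons mem_filter mem_index_enum andbT orbN.
have sum_off_o : \sum_(j <- L) (ax j * bz j - bx j * az j) = 0.
  move: sum_m1; rewrite big_filter (bigD1 o) //= axo bxo azo bzo mul0r mul1r sub0r.
  by rewrite -[RHS]addr0 => /addrI.
have := reachable_Z_phase azo bzo oL uL; rewrite !restrict_full // => reach_Z.
have := reachable_X_phase axo bxo bzo oL uL reach_Z.
by rewrite !restrict_full // sum_off_o deltav0 addr0.
Qed.

End Construction.

Lemma nat_vec_mod (f : 'I_n -> nat) k r : (f k %% D = r)%N -> nat_vec f k = r%:R.
Proof. by move=> <-; rewrite ffunE; apply: val_inj; rewrite /= !Zp_nat /= modn_mod. Qed.

Lemma intr_Zp_eqmod (x y : int) : (x = y %[mod D])%Z -> x%:~R = y%:~R :> 'I_D.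
Proof.
move=> xy; rewrite (divz_eq x D) (divz_eq y D) xy !intrD !intrM.
by rewrite -pmulrn (pchar_Zp (isT : (1 < D)%N)) !mulr0.
Qed.

Lemma sympl_Zp (P Q : pdata n) : (sympl P Q)%:~R =
  \sum_k (nat_vec (pa P) k * nat_vec (pb Q) k - nat_vec (pb P) k * nat_vec (pa Q) k) :> 'I_D.
Proof.
rewrite /sympl rmorph_sum; apply: eq_bigr => k _.
by rewrite rmorphB /= !ffunE -!natrM.
Qed.

Lemma sympl_std_XZ (o : 'I_n) : sympl (std_gen (o, false)) (std_gen (o, true)) = -1.
Proof.
rewrite /sympl (bigD1 o) //= eqxx big1 ?addr0 // => k /negbTE ko.
by rewrite ko muln0 subrr.
Qed.

Lemma circuit_conj_pauli_pair (o : 'I_n) (Px Pz : pdata n) : prime D -> odd D ->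
  nat_vec (pa Px) o = 0 -> nat_vec (pb Px) o = 1 ->
  nat_vec (pa Pz) o = 1 -> nat_vec (pb Pz) o = 0 ->
  (sympl Px Pz)%:~R = -1 :> 'I_D ->
  exists c : seq (gate n), all (@gate_ok n) c /\ exists lambda mu : algC,
    circuit_op D c *m Xq D o *m invmx (circuit_op D c) = lambda *: pauli D Px /\
    circuit_op D c *m Zq D o *m invmx (circuit_op D c) = mu *: pauli D Pz.
Proof.
move=> D_prime D_odd axo bxo azo bzo; rewrite sympl_Zp => sum_m1.
have [c c_ok [cX cZ]] := reachable_target axo bxo azo bzo sum_m1.
exists c; split => //.
have [kx kxE] := circuit_conj_weyl D_prime D_odd (Xo o) c_ok.
have [kz kzE] := circuit_conj_weyl D_prime D_odd (Zo o) c_ok.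
have [[px px0 pxE] [pz pz0 pzE]] := (pauli_weyl Px, pauli_weyl Pz).
exists (kx / px), (kz / pz); rewrite pxE pzE !scalerA !divfK // Xq_weyl Zq_weyl.
by rewrite kxE kzE cX cZ.
Qed.

End Qudits.

Unset Implicit Arguments.

Theorem lemma10 (d n : nat) (hd : prime d) (hodd : odd d) (hn : (2 <= n)%N)
  (Pbar : 'I_n * bool -> pdata n) :
  comm_preserving d Pbar ->
  (* bar X_1 = X (x) P' : exponents (a,b) = (0,1) mod d on the first qudit *)
  (pa (Pbar (q1 (ltnW hn), false)) (q1 (ltnW hn)) %% d = 0)%N ->
  (pb (Pbar (q1 (ltnW hn), false)) (q1 (ltnW hn)) %% d = 1)%N ->
  (* bar Z_1 = Z (x) Q' : exponents (a,b) = (1,0) mod d on the first qudit *)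
  (pa (Pbar (q1 (ltnW hn), true)) (q1 (ltnW hn)) %% d = 1)%N ->
  (pb (Pbar (q1 (ltnW hn), true)) (q1 (ltnW hn)) %% d = 0)%N ->
  exists c : seq (gate n), all (@gate_ok n) c /\
    exists lambda mu : algC,
      circuit_op d c *m Xq d (q1 (ltnW hn)) *m invmx (circuit_op d c)
        = lambda *: pauli d (Pbar (q1 (ltnW hn), false)) /\
      circuit_op d c *m Zq d (q1 (ltnW hn)) *m invmx (circuit_op d c)
        = mu *: pauli d (Pbar (q1 (ltnW hn), true)).
Proof.
move=> comm_pres hxa hxb hza hzb.
case: d hd hodd comm_pres hxa hxb hza hzb => [|[|m]] // hd hodd comm_pres hxa hxb hza hzb.
set o := q1 (ltnW hn).
apply: circuit_conj_pauli_pair => //;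
  rewrite ?(nat_vec_mod hxa) ?(nat_vec_mod hxb) ?(nat_vec_mod hza) ?(nat_vec_mod hzb) //.
by rewrite -(intr_Zp_eqmod (comm_pres (o, false) (o, true))) sympl_std_XZ.
Qed.
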